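(* For $b\ge 0$ let $a_b$ be the total number of cards for $b$ balls (so $a_0=1$, $a_1=2$, $a_2=7$). Then for all $b\ge 3$, \[ a_b=4a_{b-1}-2a_{b-2}. \]
   Context: For an integer $b\ge 0$, an ordered partition of $b$ is a finite sequence $(q_1,\ldots,q_k)$ of positive integers summing to $b$ (for $b=0$ the only one is the empty sequence). An ordered partition $(q_1,\ldots,q_k)$ with $k\ge1$ is nontrivially embedded into an ordered partition $(r_1,\ldots,r_\ell)$ by a choice of indices $1\le i_2<i_3<\cdots<i_k\le \ell$ with $q_j\le r_{i_j}$ for $2\le j\le k$; different index tuples count as different embeddings. A card for $b$ balls is either (i) a trivial card, given by an ordered partition $q$ of $b$, whose left and right partitions are both $q$; or (ii) a throw card, given by ordered partitions $q=(q_1,\ldots,q_k)$ ($k\ge1$) and $r=(r_1,\ldots,r_\ell)$ of $b$ together with a nontrivial embedding $(i_2,\ldots,i_k)$ of $q$ into $r$; its left partition is $q$ and its right partition is $r$. Different index tuples give different cards, and a throw card is distinct from the trivial card even when $q=r$. *)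

From mathcomp Require Import all_boot.
Set Implicit Arguments. Unset Strict Implicit. Unset Printing Implicit Defensive.

Fixpoint seqs_upto (n m : nat) : seq (seq nat) :=
  match n with
  | 0 => [:: [::]]
  | n'.+1 => [::] :: [seq x :: s | x <- iota 0 m.+1, s <- seqs_upto n' m]
  end.

Definition is_ordpart (b : nat) (q : seq nat) : bool :=
  all (fun x => 0 < x) q && (sumn q == b).

(* The ordered partitions of b (every such q has length <= b and parts <= b). *)
Definition ordparts (b : nat) : seq (seq nat) :=
  [seq q <- seqs_upto b b | is_ordpart b q].

(* idx = [:: i_2; ...; i_k] (1-based indices) is a nontrivial embedding of
   q = (q_1,...,q_k), k >= 1, into r = (r_1,...,r_l):
   1 <= i_2 < ... < i_k <= l and q_j <= r_{i_j} for 2 <= j <= k. *)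
Definition is_embedding (q r idx : seq nat) : bool :=
  [&& 0 < size q,
      size idx == (size q).-1,
      sorted ltn idx,
      all (fun i => (0 < i) && (i <= size r)) idx &
      all2 (fun qj i => qj <= nth 0 r i.-1) (behead q) idx].

Definition n_trivial (b : nat) : nat := size (ordparts b).

(* Number of throw cards for b balls: triples (q, r, embedding); the index
   tuples have length <= b and entries <= b, so they all occur in
   seqs_upto b b. *)
Definition n_throw (b : nat) : nat :=
  \sum_(q <- ordparts b) \sum_(r <- ordparts b)
     count (is_embedding q r) (seqs_upto b b).

Definition a (b : nat) : nat := n_trivial b + n_throw b.

From mathcomp Require Import all_boot zify.

(* Fix the right partition r = (r_1, ..., r_l) of b.  A throw card with right
   partition r is a sequence t = (q_2, ..., q_k) with an embedding into r, i.e.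
   a choice, for every position i of r, of either nothing or a part in
   [1, r_i]; the remaining part q_1 = b - sumn t must be positive, which only
   rules out t = r.  Hence r is the right partition of prod_i (r_i + 1) - 1
   throw cards and of one trivial card, so a_b = sum over ordered partitions r
   of b of prod_i (r_i + 1).  Splitting off the first part gives
   a_(n+1) = sum_(k=1..n+1) (k + 1) a_(n+1-k), whose differences yield the
   recurrence. *)

Set Implicit Arguments.
Unset Strict Implicit.
Unset Printing Implicit Defensive.

Lemma seqs_uptoS n m :
  seqs_upto n.+1 m = [::] :: [seq x :: s | x <- iota 0 m.+1, s <- seqs_upto n m].
Proof. by []. Qed.

Lemma mem_seqs_upto n m s :
  (s \in seqs_upto n m) = (size s <= n) && all (leq^~ m) s.
Proof.
elim: n s => [|n IH] [|x s] //; rewrite seqs_uptoS in_cons orFb.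
apply/allpairsP/idP => [[[y t] [+ + [-> ->]]] | ].
  by rewrite mem_iota IH /= ltnS => le_ym /andP[-> ->]; rewrite andbT; exact: le_ym.
move=> /andP[size_xs /andP[le_xm all_s]]; exists (x, s); split => //.
  by rewrite mem_iota.
by rewrite IH; apply/andP.
Qed.

Lemma uniq_seqs_upto n m : uniq (seqs_upto n m).
Proof.
elim: n => // n IH; rewrite seqs_uptoS cons_uniq; apply/andP; split.
  by apply/allpairsP => -[[y t] [_ _]].
by apply: allpairs_uniq => [||[x1 s1] [x2 s2] _ _ [-> ->]] //; exact: iota_uniq.
Qed.

Lemma pos_seq_bounded k s : all (fun x => 0 < x) s -> sumn s <= k ->
  (size s <= k) && all (leq^~ k) s.
Proof.
elim: s k => //= x s IH k /andP[x_gt0 s_pos] le_sum.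
have /andP[size_s all_s] := IH (k - x) s_pos ltac:(lia).
apply/and3P; split; [lia | lia | by apply: sub_all all_s => y; lia].
Qed.

Lemma is_ordpart_cons b y t :
  is_ordpart b (y :: t) = (0 < y <= b) && is_ordpart (b - y) t.
Proof.
rewrite /is_ordpart /=; case: (all _ t); rewrite ?andbF //=.
apply/idP/idP; lia.
Qed.

Lemma is_ordpart_cons_head b y t :
  is_ordpart b (y :: t) = (y == b - sumn t) && (all (fun x => 0 < x) t && (sumn t < b)).
Proof.
rewrite /is_ordpart /=; case: (all _ t); rewrite ?andbF //=.
apply/idP/idP; lia.
Qed.

Lemma ordpart_bounded b q : is_ordpart b q -> (size q <= b) && all (leq^~ b) q.
Proof. by case/andP=> q_pos /eqP q_sum; rewrite pos_seq_bounded ?q_sum. Qed.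

Section BigEnumerations.
Variables (R : Type) (idx : R) (op : Monoid.com_law idx).

Lemma big_seqs_uptoS n m (F : seq nat -> R) :
  \big[op/idx]_(s <- seqs_upto n.+1 m) F s =
  op (F [::])
     (\big[op/idx]_(0 <= x < m.+1) \big[op/idx]_(s <- seqs_upto n m) F (x :: s)).
Proof. by rewrite seqs_uptoS big_cons big_allpairs_dep /index_iota subn0. Qed.

Lemma big_seqs_upto_widen n m n' m' (P : pred (seq nat)) (F : seq nat -> R) :
  n <= n' -> m <= m' -> (forall s, P s -> (size s <= n) && all (leq^~ m) s) ->
  \big[op/idx]_(s <- seqs_upto n' m' | P s) F s =
  \big[op/idx]_(s <- seqs_upto n m | P s) F s.
Proof.
move=> le_n le_m bounded; rewrite -big_filter -[RHS]big_filter.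
apply/perm_big/uniq_perm; rewrite ?filter_uniq ?uniq_seqs_upto // => s.
rewrite !mem_filter !mem_seqs_upto; case Ps: (P s) => //=.
have /andP[size_s all_s] := bounded s Ps.
by rewrite size_s all_s (leq_trans size_s le_n) (sub_all _ all_s) // => x /leq_trans->.
Qed.

Lemma big_ordparts_seqs n (F : seq nat -> R) :
  \big[op/idx]_(q <- ordparts n.+1) F q =
  \big[op/idx]_(0 <= y < n.+2)
     \big[op/idx]_(t <- seqs_upto n n.+1 | is_ordpart n.+1 (y :: t)) F (y :: t).
Proof.
rewrite big_filter big_mkcond big_seqs_uptoS /= Monoid.mul1m.
by apply: eq_bigr => y _; rewrite [RHS]big_mkcond.
Qed.

Lemma big_ordpartsS n (F : seq nat -> R) :
  \big[op/idx]_(q <- ordparts n.+1) F q =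
  \big[op/idx]_(x < n.+1) \big[op/idx]_(t <- ordparts (n - x)) F (x.+1 :: t).
Proof.
rewrite big_ordparts_seqs big_nat_recl // big_pred0 ?Monoid.mul1m; last first.
  by move=> t; rewrite is_ordpart_cons.
rewrite big_mkord; apply: eq_bigr => x _; rewrite big_filter.
under eq_bigl do rewrite is_ordpart_cons ltn_ord subSS.
by apply: big_seqs_upto_widen => [|//|s /ordpart_bounded]; lia.
Qed.

(* The head of q is recovered from its tail as n.+1 - sumn (behead q). *)
Lemma big_ordparts_behead n (F : seq nat -> R) :
  \big[op/idx]_(q <- ordparts n.+1) F (behead q) =
  \big[op/idx]_(t <- seqs_upto n.+1 n.+1 | all (fun x => 0 < x) t && (sumn t < n.+1))
     F t.
Proof.
have bounded t : all (fun x => 0 < x) t && (sumn t < n.+1) ->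
    (size t <= n) && all (leq^~ n) t.
  by case/andP; exact: pos_seq_bounded.
rewrite [RHS](@big_seqs_upto_widen n n) //.
rewrite -[RHS](@big_seqs_upto_widen n n n n.+1) // [RHS]big_mkcond.
rewrite big_ordparts_seqs; under eq_bigr do rewrite big_mkcond.
rewrite exchange_big; apply: eq_bigr => t _; rewrite -big_mkcond.
under eq_bigl do rewrite is_ordpart_cons_head andbC.
by rewrite big_nat1_cond_eq ltnS leq_subr.
Qed.
End BigEnumerations.

Definition wsum_ordparts (w : nat -> nat) b := \sum_(q <- ordparts b) \prod_(x <- q) w x.

Lemma wsum_ordpartsS w n :
  wsum_ordparts w n.+1 = \sum_(x < n.+1) w x.+1 * wsum_ordparts w (n - x).
Proof.
rewrite /wsum_ordparts big_ordpartsS; apply: eq_bigr => x _.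
by rewrite big_distrr; apply: eq_bigr => t _; rewrite big_cons.
Qed.

Lemma wsum_ordparts_succ_rec n :
  wsum_ordparts succn n.+3 + 2 * wsum_ordparts succn n.+1 =
  4 * wsum_ordparts succn n.+2.
Proof.
pose W := wsum_ordparts succn; pose S m := \sum_(x < m.+1) W (m - x).
have W_SS m : W m.+2 = 3 * W m.+1 + S m.
  rewrite /W wsum_ordpartsS big_ord_recl subn0.
  under eq_bigr do rewrite lift0 subSS mulSn addnC.
  by rewrite big_split /= -wsum_ordpartsS addnA -mulSnr.
have S_S m : S m.+1 = W m.+1 + S m by rewrite /S big_ord_recl.
rewrite -/W W_SS S_S (W_SS n); lia.
Qed.

Section Embeddings.
Variable r : seq nat.

Definition embedding_after o t idx :=
  [&& size idx == size t, path ltn o idx, all (leq^~ (size r)) idx &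
      all2 (fun y i => y <= nth 0 r i.-1) t idx].

Lemma is_embedding_behead q idx : 0 < size q ->
  is_embedding q r idx = embedding_after 0 (behead q) idx.
Proof.
case: q => // q1 t _; rewrite /is_embedding /embedding_after (path_sortedE ltn_trans) /=.
rewrite (eq_all (a2 := predI (ltn 0) (leq^~ (size r)))) // all_predI.
by case: (all (ltn 0) idx); rewrite /= ?andbF.
Qed.

Lemma embedding_after_cons o y t i idx :
  embedding_after o (y :: t) (i :: idx) =
  [&& o < i, i <= size r, y <= nth 0 r i.-1 & embedding_after i t idx].
Proof.
rewrite /embedding_after /= eqSS.
by case: (o < i); case: (i <= size r); case: (y <= _); rewrite /= ?andbF.
Qed.

Definition n_embeddings_after o t :=
  count (embedding_after o t) (seqs_upto (size t) (size r)).

Lemma n_embeddings_after_nil o : n_embeddings_after o [::] = 1.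
Proof. by []. Qed.

Lemma n_embeddings_after_cons o y t :
  n_embeddings_after o (y :: t) =
  \sum_(o.+1 <= i < (size r).+1) (y <= nth 0 r i.-1) * n_embeddings_after i t.
Proof.
rewrite /n_embeddings_after -sum1_count big_mkcond big_seqs_uptoS /= add0n.
rewrite [RHS](@big_nat_widenl _ _ _ _ 0) // [RHS]big_mkcond.
apply: eq_big_nat => i /andP[_]; rewrite ltnS => le_iL /=.
under eq_bigr do rewrite embedding_after_cons le_iL.
case: (o < i); last by rewrite big1.
case: (y <= _); last by rewrite big1.
by rewrite /= mul1n -sum1_count [RHS]big_mkcond.
Qed.

(* Position o.+1 of r is either skipped or receives the first part of t. *)
Lemma n_embeddings_afterS o t : o < size r ->
  n_embeddings_after o t = n_embeddings_after o.+1 t +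
    (if t is y :: t' then (y <= nth 0 r o) * n_embeddings_after o.+1 t' else 0).
Proof.
case: t => [|y t] lt_or; first by rewrite !n_embeddings_after_nil.
by rewrite !n_embeddings_after_cons big_ltn ?ltnS // addnC.
Qed.

Lemma n_embeddings_after_oversize o t :
  size r <= o -> n_embeddings_after o t = (t == [::]).
Proof.
case: t => [|y t] le_ro; first by rewrite n_embeddings_after_nil.
by rewrite n_embeddings_after_cons big_geq.
Qed.

(* For o = 0 and B = sumn r, the pairs (t, idx) counted here are exactly the
   throw cards with right partition r, their first part being B - sumn t. *)
Definition n_embeddings_below o B :=
  \sum_(t <- seqs_upto B B | all (fun x => 0 < x) t && (sumn t < B))
    n_embeddings_after o t.

Lemma n_embeddings_below_oversize o B :
  size r <= o -> n_embeddings_below o B = (0 < B).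
Proof.
move=> le_ro; rewrite /n_embeddings_below.
under eq_bigr do rewrite n_embeddings_after_oversize //.
case: B => [|n]; first by rewrite big_cons big_nil.
rewrite big_mkcond big_seqs_uptoS /= big1 // => y _.
by rewrite big1 // => t _; rewrite if_same.
Qed.

Lemma n_embeddings_belowS o B : o < size r -> nth 0 r o <= B ->
  n_embeddings_below o B = n_embeddings_below o.+1 B +
    \sum_(1 <= y < (nth 0 r o).+1) n_embeddings_below o.+1 (B - y).
Proof.
move=> lt_or le_xB; rewrite /n_embeddings_below.
under eq_bigr do rewrite n_embeddings_afterS //.
rewrite big_split /=; congr (_ + _).
case: B le_xB => [|n] le_xB.
  by rewrite big_geq // big_cons big_nil.
rewrite big_mkcond big_seqs_uptoS /= add0n big_ltn // big1 ?add0n; last by move=> t _.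
rewrite [RHS](@big_nat_widen _ _ _ 1 _ n.+2) // [RHS]big_mkcond.
apply: eq_big_nat => y /andP[y_gt0 _]; rewrite ltnS.
case: (leqP y (nth 0 r o)) => [le_yx|_]; last by rewrite big1 // => t _; rewrite if_same.
rewrite y_gt0 /=; under eq_bigr do rewrite mul1n.
rewrite -big_mkcond; under eq_bigl do rewrite -ltn_subRL.
apply: big_seqs_upto_widen => [||t /andP[t_pos /ltnW]]; [lia | exact: leq_subr |].
exact: pos_seq_bounded.
Qed.

Lemma n_embeddings_below_large o B : sumn (drop o r) < B ->
  n_embeddings_below o B = \prod_(x <- drop o r) x.+1.
Proof.
move Ek: (size r - o) => k; elim: k o B Ek => [|k IH] o B Ek lt_sum.
  have le_ro : size r <= o by lia.
  by move: lt_sum; rewrite drop_oversize // big_nil n_embeddings_below_oversize // => ->.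
have lt_or : o < size r by lia.
move: lt_sum; rewrite (drop_nth 0 lt_or) big_cons /= => lt_sum.
rewrite n_embeddings_belowS //; last by lia.
rewrite IH; [|lia|lia].
rewrite (eq_big_nat _ _ (F2 := fun=> \prod_(x <- drop o.+1 r) x.+1)); last first.
  by move=> y /andP[y_gt0 le_yx]; rewrite IH //; lia.
by rewrite sum_nat_const_nat subn1 mulSn.
Qed.

Lemma n_embeddings_below_sumn o : all (fun x => 0 < x) (drop o r) ->
  n_embeddings_below o (sumn (drop o r)) = (\prod_(x <- drop o r) x.+1).-1.
Proof.
move Ek: (size r - o) => k; elim: k o Ek => [|k IH] o Ek.
  have le_ro : size r <= o by lia.
  by rewrite drop_oversize // n_embeddings_below_oversize // big_nil.
have lt_or : o < size r by lia.
rewrite (drop_nth 0 lt_or) /= big_cons => /andP[x_gt0 rest_pos].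
rewrite n_embeddings_belowS // ?leq_addr // n_embeddings_below_large; last by lia.
have P_gt0 : 0 < \prod_(y <- drop o.+1 r) y.+1 by apply: prodn_gt0.
case: (nth 0 r o) x_gt0 => // x _.
rewrite big_nat_recr //= addKn IH //; last by lia.
rewrite (eq_big_nat _ _ (F2 := fun=> \prod_(y <- drop o.+1 r) y.+1)); last first.
  by move=> y /andP[y_gt0 lt_yx]; rewrite n_embeddings_below_large //; lia.
by rewrite sum_nat_const_nat subn1 !mulSn /=; lia.
Qed.

Lemma sum_count_is_embedding b : is_ordpart b r ->
  \sum_(q <- ordparts b) count (is_embedding q r) (seqs_upto b b) =
  (\prod_(x <- r) x.+1).-1.
Proof.
case: b => [|n] r_part.
  have -> : r = [::] by case: r r_part => // x s /andP[/= /andP[x_gt0 _] /eqP]; lia.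
  by rewrite big_cons !big_nil.
have count_q q : q \in ordparts n.+1 ->
    count (is_embedding q r) (seqs_upto n.+1 n.+1) = n_embeddings_after 0 (behead q).
  rewrite mem_filter => /andP[q_part _].
  have /andP[size_q _] := ordpart_bounded q_part.
  have q_ne : 0 < size q by case: q q_part {size_q}.
  rewrite (eq_count (fun idx => is_embedding_behead idx q_ne)) /n_embeddings_after.
  rewrite -!sum1_count.
  apply: big_seqs_upto_widen => [||idx /and4P[/eqP-> _ all_idx _]].
  - by rewrite size_behead; lia.
  - by have /andP[] := ordpart_bounded r_part.
  - by rewrite leqnn.
rewrite (eq_big_seq _ count_q) big_ordparts_behead.
case/andP: r_part => r_pos /eqP r_sum.
by have := @n_embeddings_below_sumn 0; rewrite drop0 r_sum /n_embeddings_below => ->.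
Qed.
End Embeddings.

Lemma a_wsum_ordparts b : a b = wsum_ordparts succn b.
Proof.
rewrite /a /n_trivial /n_throw /wsum_ordparts -sum1_size exchange_big -big_split /=.
apply: eq_big_seq => r; rewrite mem_filter => /andP[r_part _].
by rewrite sum_count_is_embedding // add1n prednK // prodn_gt0.
Qed.

Theorem theorem4 (b : nat) : 3 <= b -> a b + 2 * a (b - 2) = 4 * a (b - 1).
Proof.
case: b => [|[|[|n]]] // _.
by rewrite !subSS !subn0 !a_wsum_ordparts wsum_ordparts_succ_rec.
Qed.
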